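(* Let $a>0$, $b>0$, $g>0$, $m>0$, $n>0$ and $0<e<1$, and consider the quadratic equation in $y$ $$a_1y^2+a_2y+a_3=0,$$ where $a_1=(eg+1)n$, $a_2=(b+m)(eg+1)+n(e-a)$, $a_3=e(b+m)-ab$, and let $\Delta=a_2^2-4a_1a_3$. Then: (1) if $a>\frac{e(m+b)}{b}$, the equation has a positive root $y_1=\frac{-a_2+\sqrt{\Delta}}{2a_1}$; (2) if $n>\frac{(eg+1)b^2+m(eg+1)b}{me}$ and $a=\frac{e(m+b)}{b}$, the equation has a positive root $y_1=\frac{-a_2+\sqrt{\Delta}}{2a_1}$.
   Context: This quadratic is the equation satisfied by the $y$-coordinate of a positive (endemic) equilibrium of the planar system $\dot x=a-ex-\frac{xy}{1+gy}$, $\dot y=\frac{xy}{1+gy}-y-\frac{my}{b+ny}$ (a rescaled SIR epidemic model with saturated incidence and saturated treatment), after substituting $x=\frac{a(1+gy)}{e+(eg+1)y}$. *)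

From Stdlib Require Import Reals.
Open Scope R_scope.

Definition qa1 (e g n : R) : R := (e*g+1)*n.
Definition qa2 (a b e g m n : R) : R := (b+m)*(e*g+1) + n*(e-a).
Definition qa3 (a b e m : R) : R := e*(b+m) - a*b.
Definition qDelta (a b e g m n : R) : R :=
  (qa2 a b e g m n)^2 - 4*(qa1 e g n)*(qa3 a b e m).
Definition qy1 (a b e g m n : R) : R :=
  (- qa2 a b e g m n + sqrt (qDelta a b e g m n)) / (2 * qa1 e g n).

(** With [a1 > 0], the root [y1] taken with [+ sqrt Delta] is a genuine root as soon as
    [Delta >= 0], which holds whenever [a3 <= 0].  If [a > e(m+b)/b] then [a3 < 0], so
    [sqrt Delta > |a2|] and [y1 > 0].  If [a = e(m+b)/b] then [a3 = 0], the roots are [0]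
    and [-a2/a1], and [y1 = (|a2| - a2)/(2 a1)] is positive exactly when [a2 < 0],
    which is what the lower bound on [n] says. *)

From Stdlib Require Import Reals Lra Psatz.
Open Scope R_scope.

Definition discr (A B C : R) : R := B^2 - 4*A*C.

Definition root_plus (A B C : R) : R := (- B + sqrt (discr A B C)) / (2*A).

Lemma discr_ge0_of_const_le0 (A B C : R) : 0 < A -> C <= 0 -> 0 <= discr A B C.
Proof. intros HA HC; unfold discr; nra. Qed.

Lemma root_plusP (A B C : R) :
  0 < A -> 0 <= discr A B C ->
  A * (root_plus A B C)^2 + B * root_plus A B C + C = 0.
Proof.
  intros HA HD; unfold root_plus.
  assert (Hs : sqrt (discr A B C) ^ 2 = B^2 - 4*A*C).
  { rewrite <- Rsqr_pow2; exact (Rsqr_sqrt _ HD). }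
  field_simplify; [| lra].
  rewrite Hs; field; lra.
Qed.

Lemma root_plus_gt0_of_const_lt0 (A B C : R) :
  0 < A -> C < 0 -> 0 < root_plus A B C.
Proof.
  intros HA HC; unfold root_plus.
  apply Rdiv_lt_0_compat; [| lra].
  assert (HB : Rabs B < sqrt (discr A B C)).
  { rewrite <- sqrt_Rsqr_abs; apply sqrt_lt_1_alt.
    split; [apply Rle_0_sqr |]; unfold Rsqr, discr; nra. }
  pose proof (Rle_abs B); lra.
Qed.

Lemma root_plus_gt0_of_const0 (A B : R) :
  0 < A -> B < 0 -> 0 < root_plus A B 0.
Proof.
  intros HA HB; unfold root_plus, discr.
  replace (B^2 - 4*A*0) with (Rsqr B) by (unfold Rsqr; ring).
  rewrite sqrt_Rsqr_abs, Rabs_left by exact HB.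
  apply Rdiv_lt_0_compat; lra.
Qed.

Section Coefficients.

Variables a b g m n e : R.
Hypotheses (Hb : 0 < b) (Hg : 0 < g) (Hm : 0 < m) (Hn : 0 < n) (He : 0 < e).

Lemma qa1_gt0 : 0 < qa1 e g n.
Proof. unfold qa1; apply Rmult_lt_0_compat; nra. Qed.

Lemma qa3_lt0 : a > e*(m+b)/b -> qa3 a b e m < 0.
Proof.
  intros Ha; unfold qa3.
  apply Rmult_gt_compat_r with (r := b) in Ha; [| lra].
  replace (e*(m+b)/b*b) with (e*(m+b)) in Ha by (field; lra).
  lra.
Qed.

Lemma qa3_eq0 : a = e*(m+b)/b -> qa3 a b e m = 0.
Proof. intros ->; unfold qa3; field; lra. Qed.

Lemma qa2_lt0 :
  a = e*(m+b)/b -> n > ((e*g+1)*b^2 + m*(e*g+1)*b)/(m*e) -> qa2 a b e g m n < 0.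
Proof.
  intros -> Hn'; unfold qa2.
  assert (Hme : 0 < m*e) by nra.
  apply Rmult_gt_compat_r with (r := m*e) in Hn'; [| lra].
  replace (((e*g+1)*b^2 + m*(e*g+1)*b)/(m*e)*(m*e))
    with (b*((b+m)*(e*g+1))) in Hn' by (field; lra).
  replace (e - e*(m+b)/b) with (- (e*m/b)) by (field; lra).
  apply Rmult_lt_reg_r with (r := b); [exact Hb |].
  replace (((b+m)*(e*g+1) + n*-(e*m/b))*b)
    with (b*((b+m)*(e*g+1)) - n*(m*e)) by (field; lra).
  lra.
Qed.

End Coefficients.

Theorem lemma1p1 (a b g m n e : R) :
  0 < a -> 0 < b -> 0 < g -> 0 < m -> 0 < n -> 0 < e < 1 ->
  ((a > e*(m+b)/b) \/
   (n > ((e*g+1)*b^2 + m*(e*g+1)*b)/(m*e) /\ a = e*(m+b)/b)) ->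
  0 <= qDelta a b e g m n /\
  0 < qy1 a b e g m n /\
  qa1 e g n * (qy1 a b e g m n)^2 + qa2 a b e g m n * qy1 a b e g m n
    + qa3 a b e m = 0.
Proof.
  intros _ Hb Hg Hm Hn [He _] Hcase.
  change (qDelta a b e g m n) with (discr (qa1 e g n) (qa2 a b e g m n) (qa3 a b e m)).
  change (qy1 a b e g m n) with (root_plus (qa1 e g n) (qa2 a b e g m n) (qa3 a b e m)).
  pose proof (qa1_gt0 g n e Hg Hn He) as Ha1.
  assert (HD : 0 <= discr (qa1 e g n) (qa2 a b e g m n) (qa3 a b e m)).
  { apply discr_ge0_of_const_le0; [exact Ha1 |].
    destruct Hcase as [Ha | [_ Ha]].
    - apply Rlt_le, (qa3_lt0 a b m e Hb Ha).
    - rewrite (qa3_eq0 a b m e Hb Ha); lra. }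
  split; [exact HD |]; split; [| exact (root_plusP _ _ _ Ha1 HD)].
  destruct Hcase as [Ha | [Hn' Ha]].
  - exact (root_plus_gt0_of_const_lt0 _ _ _ Ha1 (qa3_lt0 a b m e Hb Ha)).
  - rewrite (qa3_eq0 a b m e Hb Ha).
    exact (root_plus_gt0_of_const0 _ _ Ha1 (qa2_lt0 a b g m n e Hb Hm He Ha Hn')).
Qed.
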